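(* Let $(G,\varphi)$ be a complex unit gain graph of order $n$ with $r(G,\varphi)=2n-2c(G)-2\alpha(G)$, and let $u$ be a vertex of $G$ lying on a cycle of $G$. Then: (i) $r(G,\varphi)=r(G-u,\varphi)$; (ii) $r(G-u,\varphi)=2(n-1)-2c(G-u)-2\alpha(G-u)$; (iii) $c(G)=c(G-u)+1$; (iv) $\alpha(G)=\alpha(G-u)$; (v) $u$ lies on exactly one cycle of $G$, and $u$ is not a quasi-pendant vertex of $G$.
   Context: A complex unit gain graph $(G,\varphi)$ is a simple finite graph $G$ with a gain function $\varphi$ assigning to each oriented edge $e_{ij}$ a complex number of modulus $1$ with $\varphi(e_{ji})=\overline{\varphi(e_{ij})}$; its adjacency matrix has $(i,j)$-entry $\varphi(e_{ij})$ for adjacent $v_i,v_j$ and $0$ otherwise, and $r(G,\varphi)$ is its rank; induced subgraphs carry the restricted gain. $\alpha$ is the independence number and $c(G)=|E(G)|-|V(G)|+\omega(G)$ the cyclomatic number ($\omega$ = number of components). A pendant vertex is a vertex of degree $1$; a quasi-pendant vertex is a vertex that is adjacent to a pendant vertex and is not itself a pendant vertex. *)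

From HB Require Import structures.
From mathcomp Require Import all_boot all_order all_algebra.
From mathcomp Require Import complex reals.
Set Implicit Arguments. Unset Strict Implicit. Unset Printing Implicit Defensive.
Import Order.TTheory GRing.Theory Num.Theory.

Local Open Scope ring_scope.

Definition simple_graph (T : finType) (e : rel T) : Prop :=
  irreflexive e /\ symmetric e.

Definition unit_gain (R : realType) (T : finType) (e : rel T)
  (phi : T -> T -> R[i]) : Prop :=
  forall x y, e x y -> `|phi x y| = 1 /\ phi y x = (phi x y)^*.

(* Induced subgraph on vertex set S (with restricted gain): its adjacency
   matrix, indexed through the enumeration of S. *)
Definition gain_adj (R : realType) (T : finType) (e : rel T)
  (phi : T -> T -> R[i]) (S : {set T}) : 'M[R[i]]_#|S| :=
  \matrix_(i, j) (if e (enum_val i) (enum_val j)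
                  then phi (enum_val i) (enum_val j) else 0).

Definition gain_rank (R : realType) (T : finType) (e : rel T)
  (phi : T -> T -> R[i]) (S : {set T}) : nat :=
  \rank (gain_adj e phi S).

Definition independent (T : finType) (e : rel T) (I : {set T}) : bool :=
  [forall x in I, forall y in I, ~~ e x y].

Definition indep_num (T : finType) (e : rel T) (S : {set T}) : nat :=
  \max_(I : {set T} | (I \subset S) && independent e I) #|I|.

Definition edges_in (T : finType) (e : rel T) (S : {set T}) : {set {set T}} :=
  [set E : {set T} | [exists x in S, exists y in S, e x y && (E == [set x; y])]].

Definition restr (T : finType) (e : rel T) (S : {set T}) : rel T :=
  fun x y => [&& x \in S, y \in S & e x y].

Definition ncomp (T : finType) (e : rel T) (S : {set T}) : nat :=
  n_comp (restr e S) (mem S).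

(* Cyclomatic number |E| - |V| + omega (always >= 0, so the nat
   subtraction below is exact). *)
Definition cyclomatic (T : finType) (e : rel T) (S : {set T}) : nat :=
  (#|edges_in e S| + ncomp e S - #|S|)%N.

Definition is_cycle (T : finType) (e : rel T) (p : seq T) : bool :=
  (2 < size p)%N && ucycleb e p.

Definition cycle_edges (T : finType) (p : seq T) : {set {set T}} :=
  [set [set x; next p x] | x in p].

Definition on_unique_cycle (T : finType) (e : rel T) (u : T) : Prop :=
  exists p, [/\ is_cycle e p, u \in p &
    forall q, is_cycle e q -> u \in q -> cycle_edges q = cycle_edges p].

Definition degree (T : finType) (e : rel T) (x : T) : nat := #|[set y | e x y]|.

Definition pendant (T : finType) (e : rel T) (x : T) : bool := degree e x == 1%N.

Definition quasi_pendant (T : finType) (e : rel T) (x : T) : bool :=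
  ~~ pendant e x && [exists y, e x y && pendant e y].

From HB Require Import structures.
From mathcomp Require Import all_boot all_order all_algebra.
From mathcomp Require Import complex reals.
From mathcomp Require Import zify.
Import Order.TTheory GRing.Theory Num.Theory.
Set Implicit Arguments. Unset Strict Implicit. Unset Printing Implicit Defensive.

(* For a vertex x of G let d(x) be its degree and k(x) the number of
   components of G - x containing a neighbour of x; then
   c(G) = c(G - x) + d(x) - k(x).  The lower bound r >= 2n - 2c - 2 alpha is
   proved by induction on n, deleting a vertex with k < d (c drops, r and
   alpha do not grow), an isolated vertex (alpha drops) or a pendant vertex
   with its neighbour (r drops by 2, alpha by 1); one of these exists because
   a graph in which k = d everywhere is a forest.  When the bound is attained
   and k(u) < d(u), as for any u on a cycle, every inequality in the first
   kind of step is tight, which gives (i)-(iv).  Two cycles through u with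
   different edge sets yield a vertex with d >= k + 2, whose deletion would
   make c drop by two; a pendant neighbour w of u would make r + 2c + 2 alpha
   drop by at least 6 from G to G - u - w, while 2n drops by 4. *)

Section InducedSubgraph.
Variables (T : finType) (e : rel T).
Hypotheses (e_irr : irreflexive e) (e_sym : symmetric e).
Implicit Types (S : {set T}) (x y z : T) (p q : seq T).

Local Notation conn S := (connect (restr e S)).
Local Notation croot S := (fingraph.root (restr e S)).

Definition nbhd S x := [set y in S | e x y].

Definition deg_in S x := #|nbhd S x|.

Definition ncomp_nbhd S x := #|croot (S :\ x) @: nbhd S x|.

Lemma restr_sym S : symmetric (restr e S).
Proof. by move=> x y; rewrite /restr e_sym andbCA. Qed.

Lemma connect_restr_sym S : connect_sym (restr e S).
Proof. exact/sym_connect_sym/restr_sym. Qed.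

Lemma connect_restr_mem S y z : conn S y z -> y \in S -> z \in S.
Proof.
case/connectP=> p + -> {z}; elim: p y => [|z p IHp] y //=.
by move=> /andP[/and3P[_ zS _] pzp] _; apply: IHp pzp zS.
Qed.

Lemma connect_restr_sub S S' y z : S \subset S' -> conn S y z -> conn S' y z.
Proof.
move=> sSS' /connectP[p pS ->]; apply/connectP; exists p => //.
by apply: sub_path pS => a b /and3P[aS bS eab]; rewrite /restr !(subsetP sSS').
Qed.

Lemma ncomp_roots S : ncomp e S = #|croot S @: S|.
Proof.
rewrite /ncomp /n_comp_mem; apply: eq_card => z; rewrite !inE.
apply/andP/imsetP => [[/eqP rz zS]|[y yS ->]]; first by exists z.
split; first exact: (roots_root (connect_restr_sym S)).
exact: connect_restr_mem (connect_root _ y) _.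
Qed.

Lemma nbhd_subD1 S x : nbhd S x \subset S :\ x.
Proof.
apply/subsetP => y; rewrite !inE => /andP[-> exy]; rewrite andbT.
by apply: contraTneq exy => ->; rewrite e_irr.
Qed.

Lemma nbhd_sub S S' x : S \subset S' -> nbhd S x \subset nbhd S' x.
Proof. by move=> sSS'; apply/subsetP => y; rewrite !inE => /andP[/(subsetP sSS') -> ->]. Qed.

Lemma edges_inP S E :
  reflect (exists a b, [/\ a \in S, b \in S, e a b & E = [set a; b]]) (E \in edges_in e S).
Proof.
rewrite inE; apply: (iffP existsP) => [[a /andP[aS /existsP[b]]]|[a [b [aS bS eab ->]]]].
  by case/and3P=> bS eab /eqP->; exists a, b.
by exists a; rewrite aS; apply/existsP; exists b; rewrite bS eab eqxx.
Qed.

Lemma edges_in0 : edges_in e set0 = set0.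
Proof. by apply/setP => E; rewrite in_set0; apply/negP => /edges_inP[a [b []]]; rewrite inE. Qed.

Lemma card_edges_inD1 S x :
  x \in S -> #|edges_in e S| = (#|edges_in e (S :\ x)| + deg_in S x)%N.
Proof.
move=> xS; pose Ex := [set [set x; y] | y in nbhd S x].
have -> : edges_in e S = edges_in e (S :\ x) :|: Ex.
  apply/setP => E; rewrite in_setU; apply/edges_inP/orP.
    case=> a [b [aS bS eab ->]].
    have [ax|ax] := eqVneq a x; first by subst a; right; apply: imset_f; rewrite inE bS.
    have [bx|bx] := eqVneq b x.
      by subst b; right; rewrite setUC; apply: imset_f; rewrite inE aS e_sym.
    by left; apply/edges_inP; exists a, b; rewrite !in_setD1 ax bx.
  case=> [/edges_inP[a [b [/setD1P[_ aS] /setD1P[_ bS] eab ->]]]|/imsetP[y]].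
    by exists a, b.
  by rewrite inE => /andP[yS exy] ->; exists x, y.
rewrite cardsU card_in_imset => [|y1 y2 /[!inE] /andP[_ exy1] _].
  suff -> : edges_in e (S :\ x) :&: Ex = set0 by rewrite cards0 subn0.
  apply/setP => E; rewrite in_setI in_set0; apply/andP => -[/edges_inP[a [b [aS bS _ ->]]]].
  case/imsetP=> y _ /setP/(_ x); rewrite !inE eqxx.
  by move: aS bS => /setD1P[ax _] /setD1P[bx _]; rewrite eq_sym (negPf ax) eq_sym (negPf bx).
move/setP/(_ y1); rewrite !inE eqxx orbT eq_sym.
have /negPf-> : x != y1 by apply: contraTneq exy1 => <-; rewrite e_irr.
by move/esym/eqP.
Qed.

Lemma connect_restrD1 S x y z : y \in S :\ x -> conn S y z ->
  conn (S :\ x) y z \/ exists2 n, n \in nbhd S x & conn (S :\ x) y n.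
Proof.
move=> + /connectP[p + ->] {z}; elim: p y => [|z p IHp] y yS' /=.
  by left; apply: connect0.
case/andP=> /and3P[yS zS eyz] pz.
have [zx|zx] := eqVneq z x.
  by right; exists y; [rewrite inE yS -zx e_sym | apply: connect0].
have zS' : z \in S :\ x by rewrite in_setD1 zx.
have yz : conn (S :\ x) y z by apply: connect1; rewrite /restr yS' zS'.
case: (IHp z zS' pz) => [zl|[n nN zn]]; first by left; apply: connect_trans zl.
by right; exists n => //; apply: connect_trans zn.
Qed.

Section VertexDeletion.
Variables (S : {set T}) (x : T).
Hypothesis xS : x \in S.

Local Notation r := (croot S).
Local Notation r' := (croot (S :\ x)).

Let symS := connect_restr_sym S.
Let symS' := connect_restr_sym (S :\ x).

Lemma croot_D1 y : y \in S :\ x -> r (r' y) = r y.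
Proof.
move=> yS'; symmetry; apply/(fingraph.rootP symS).
exact: connect_restr_sub (subD1set S x) (connect_root _ y).
Qed.

Lemma connect_nbhd_root y : y \in S :\ x -> conn S y x -> r' y \in r' @: nbhd S x.
Proof.
move=> yS' /(connect_restrD1 yS') [/connect_restr_mem/(_ yS')|[n nN yn]].
  by rewrite !inE eqxx.
by apply/imsetP; exists n => //; apply/(fingraph.rootP symS').
Qed.

(* Components of [S :\ x] avoiding the neighbourhood of [x] are components of
   [S]; those meeting it merge, together with [x], into one component. *)
Lemma ncompD1 : (ncomp e S + ncomp_nbhd S x = ncomp e (S :\ x) + 1)%N.
Proof.
rewrite !ncomp_roots /ncomp_nbhd.
set A' := r' @: (S :\ x); set B := r' @: nbhd S x.
have r_inj : {in A' :\: B &, injective r}.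
  move=> _ _ /setDP[/imsetP[y1 y1S ->] y1B] /setDP[/imsetP[y2 y2S ->] _].
  rewrite !croot_D1 // => /(fingraph.rootP symS) /(connect_restrD1 y1S).
  case=> [/(fingraph.rootP symS') //|[n nN y1n]].
  by case/imsetP: y1B; exists n => //; apply/(fingraph.rootP symS').
have r_img : r @: (A' :\: B) = r @: S :\ r x.
  apply/setP => s; apply/imsetP/setD1P.
    case=> _ /setDP[/imsetP[y yS' ->] yB] ->; rewrite croot_D1 //.
    split; last by apply: imset_f; case/setD1P: yS'.
    by rewrite (root_connect symS); apply: contra yB; apply: connect_nbhd_root.
  case=> sx /imsetP[z zS sz].
  have zS' : z \in S :\ x by rewrite in_setD1 zS andbT; apply: contraNneq sx => zx; rewrite sz zx.
  exists (r' z); last by rewrite sz croot_D1.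
  rewrite in_setD (imset_f _ zS') andbT; apply: contra sx.
  case/imsetP=> n nN /(fingraph.rootP symS') zn.
  rewrite sz; apply/eqP/(fingraph.rootP symS).
  apply: connect_trans (connect_restr_sub (subD1set S x) zn) (connect1 _).
  by move: nN; rewrite inE /restr xS e_sym => /andP[-> ->].
rewrite -(cardsID B A') (setIidPr (imsetS _ (nbhd_subD1 S x))).
rewrite -(card_in_imset r_inj) r_img (cardsD1 (r x) (r @: S)) imset_f // -/B; lia.
Qed.

End VertexDeletion.

Lemma ncomp_nbhd_le_deg S x : (ncomp_nbhd S x <= deg_in S x)%N.
Proof. exact: leq_imset_card. Qed.

Lemma ncomp_gt0 S x : x \in S -> (0 < ncomp e S)%N.
Proof.
by move=> xS; rewrite ncomp_roots card_gt0; apply/set0Pn; exists (croot S x); apply: imset_f.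
Qed.

Lemma cyclomatic0 : cyclomatic e set0 = 0%N.
Proof. by rewrite /cyclomatic edges_in0 ncomp_roots imset0 !cards0. Qed.

Lemma card_le_edges_ncomp S : (#|S| <= #|edges_in e S| + ncomp e S)%N.
Proof.
have [n] := ubnP #|S|; elim: n S => // n IHn S /ltnSE-leSn.
have [->|[x xS]] := set_0Vmem S; first by rewrite cards0.
have := IHn (S :\ x); have := ncompD1 xS; have := ncomp_nbhd_le_deg S x.
by rewrite (card_edges_inD1 xS); move: leSn; rewrite (cardsD1 x S) xS; lia.
Qed.

Lemma cyclomaticD1 S x : x \in S ->
  (cyclomatic e S + ncomp_nbhd S x = cyclomatic e (S :\ x) + deg_in S x)%N.
Proof.
move=> xS; rewrite /cyclomatic (card_edges_inD1 xS) (cardsD1 x S) xS.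
have := ncompD1 xS; have := ncomp_nbhd_le_deg S x.
have := card_le_edges_ncomp S; have := card_le_edges_ncomp (S :\ x).
by rewrite (card_edges_inD1 xS) (cardsD1 x S) xS; lia.
Qed.

Lemma leq_cyclomaticD1 S x : x \in S -> (cyclomatic e (S :\ x) <= cyclomatic e S)%N.
Proof. by move=> xS; have := cyclomaticD1 xS; have := ncomp_nbhd_le_deg S x; lia. Qed.

Lemma leq_ncomp_nbhd_add S x (D : {set T}) : D \subset nbhd S x ->
  {in D, forall b, exists2 a, a \in nbhd S x :\: D & conn (S :\ x) a b} ->
  (ncomp_nbhd S x + #|D| <= deg_in S x)%N.
Proof.
move=> sDN Dconn; rewrite /ncomp_nbhd /deg_in.
have -> : croot (S :\ x) @: nbhd S x = croot (S :\ x) @: (nbhd S x :\: D).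
  apply/eqP; rewrite eqEsubset [X in _ && X]imsetS ?subsetDl // andbT.
  apply/subsetP => _ /imsetP[b bN ->]; have [bD|bD] := boolP (b \in D).
    have [a aND ab] := Dconn b bD; apply/imsetP; exists a => //.
    by symmetry; apply/(fingraph.rootP (connect_restr_sym _)).
  by apply: imset_f; rewrite in_setD bD bN.
rewrite -(cardsID D (nbhd S x)) (setIidPr sDN) [leqRHS]addnC leq_add2r.
exact: leq_imset_card.
Qed.

Lemma ncomp_nbhd_ltP S x :
  reflect (exists a b, [/\ a != b, a \in nbhd S x, b \in nbhd S x & conn (S :\ x) a b])
          (ncomp_nbhd S x < deg_in S x)%N.
Proof.
apply: (iffP idP) => [lt_kd|[a [b [ab aN bN cab]]]]; last first.
  rewrite -addn1 -(cards1 b); apply: leq_ncomp_nbhd_add => [|_ /set1P->].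
    by rewrite sub1set.
  by exists a; rewrite // in_setD in_set1 ab.
have /existsP[a /existsP[b /and4P[ab aN bN cab]]] :
    [exists a, exists b, [&& a != b, a \in nbhd S x, b \in nbhd S x & conn (S :\ x) a b]].
  apply: contraLR lt_kd => /existsPn noPair; rewrite -leqNgt.
  apply/eq_leq/esym/eqP/imset_injP => a b aN bN /(fingraph.rootP (connect_restr_sym _)) ab.
  apply/eqP/negPn/negP => nab; have /existsPn/(_ b) := noPair a.
  by rewrite nab aN bN ab.
by exists a, b.
Qed.

Lemma exists_cut_vertex S : (0 < cyclomatic e S)%N ->
  exists2 x, x \in S & (ncomp_nbhd S x < deg_in S x)%N.
Proof.
have [n] := ubnP #|S|; elim: n S => // n IHn S /ltnSE-leSn cS_gt0.
have [S0|[x xS]] := set_0Vmem S; first by move: cS_gt0; rewrite S0 cyclomatic0.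
have [|kx] := ltnP (ncomp_nbhd S x) (deg_in S x); first by exists x.
have [||y /setD1P[yx yS] ky] := IHn (S :\ x).
- by move: leSn; rewrite (cardsD1 x S) xS.
- by have := cyclomaticD1 xS; have := ncomp_nbhd_le_deg S x; lia.
exists y => //; case/ncomp_nbhd_ltP: ky => a [b [ab aN bN cab]].
have sN := subsetP (nbhd_sub y (subD1set S x)).
apply/ncomp_nbhd_ltP; exists a, b; split; rewrite ?sN //.
by apply: connect_restr_sub cab; rewrite setDDl setUC -setDDl subD1set.
Qed.

Lemma deg_inD1 S x y : x \in S -> y \in S :\ x ->
  deg_in S y = (deg_in (S :\ x) y + e y x)%N.
Proof.
move=> xS yS'; rewrite /deg_in (cardsD1 x (nbhd S y)) inE xS /= addnC; congr (_ + _)%N.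
by apply: eq_card => z; rewrite !inE; case: (z == x); rewrite ?andbF.
Qed.

Lemma sum_adj S x : x \in S -> (\sum_(y in S :\ x) e y x)%N = deg_in S x.
Proof.
move=> xS; rewrite -big_mkcondr /= sum1_card /deg_in; apply: eq_card => z.
rewrite unfold_in /= in_setD1 inE (e_sym z x).
by have [->|] := eqVneq z x; rewrite ?e_irr ?andbF.
Qed.

Lemma handshake S : (\sum_(y in S) deg_in S y = 2 * #|edges_in e S|)%N.
Proof.
have [n] := ubnP #|S|; elim: n S => // n IHn S /ltnSE-leSn.
have [->|[x xS]] := set_0Vmem S; first by rewrite big_set0 edges_in0 cards0.
rewrite (big_setD1 x xS) /= (eq_bigr _ (fun y => deg_inD1 xS)) big_split /=.
rewrite IHn ?sum_adj ?(card_edges_inD1 xS) //; first lia.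
by move: leSn; rewrite (cardsD1 x S) xS.
Qed.

Lemma exists_leaf S x : x \in S -> cyclomatic e S = 0%N ->
  exists2 y, y \in S & (deg_in S y <= 1)%N.
Proof.
move=> xS c0; apply/exists_inP; apply: contraT => /exists_inPn deg_ge2.
have : (\sum_(y in S) 2 <= \sum_(y in S) deg_in S y)%N.
  by apply: leq_sum => y /deg_ge2; rewrite -ltnNge.
rewrite handshake sum_nat_const; have := ncomp_gt0 xS.
by move: c0; rewrite /cyclomatic; lia.
Qed.

Lemma independentP (I : {set T}) :
  reflect {in I &, forall a b, ~~ e a b} (independent e I).
Proof.
apply: (iffP forall_inP) => [indI a b aI bI|indI a aI].
  exact: forall_inP (indI a aI) b bI.
by apply/forall_inP => b bI; apply: indI.
Qed.

Lemma indep_num_witness S :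
  exists2 I : {set T}, (I \subset S) && independent e I & #|I| = indep_num e S.
Proof.
have indep0 : (set0 \subset S) && independent e set0.
  by rewrite sub0set; apply/independentP => a; rewrite inE.
rewrite /indep_num (bigop.bigmax_eq_arg set0 indep0).
by case: arg_maxnP => // I PI _; exists I.
Qed.

Lemma indep_num_mono S S' : S \subset S' -> (indep_num e S <= indep_num e S')%N.
Proof.
move=> sSS'; apply/bigmax_leqP => I /andP[IS indI]; apply: leq_bigmax_cond.
by rewrite indI (subset_trans IS sSS').
Qed.

Lemma ltn_indep_num_nonadj S S' x : x \in S -> S' \subset S :\ x ->
  {in S', forall y, ~~ e x y} -> (indep_num e S' < indep_num e S)%N.
Proof.
move=> xS sS' nadj; have [I /andP[IS' indI] <-] := indep_num_witness S'.
have IS := subset_trans IS' sS'.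
have xI : x \notin I by apply/negP => /(subsetP IS); rewrite !inE eqxx.
suff: (#|x |: I| <= indep_num e S)%N by rewrite cardsU1 xI.
apply: leq_bigmax_cond; rewrite subUset sub1set xS (subset_trans IS (subD1set S x)) /=.
apply/independentP => a b /setU1P[->|aI] /setU1P[->|bI].
- by rewrite e_irr.
- exact: nadj (subsetP IS' b bI).
- by rewrite e_sym; apply: nadj (subsetP IS' a aI).
- exact: independentP indI a b aI bI.
Qed.

Lemma ltn_indep_num_pendant S w u : w \in S -> nbhd S w = [set u] ->
  (indep_num e (S :\ w :\ u) < indep_num e S)%N.
Proof.
move=> wS Nw; apply: ltn_indep_num_nonadj wS (subD1set _ _) _ => y /setD1P[yu /setD1P[_ yS]].
apply: contra yu => ewy; have : y \in nbhd S w by rewrite inE yS.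
by rewrite Nw => /set1P->.
Qed.

Lemma pendant_nbhd x y : pendant e x -> e x y -> nbhd setT x = [set y].
Proof.
move=> /cards1P[z Nx] exy.
have -> : nbhd setT x = [set z] by rewrite -Nx; apply/setP => v; rewrite !inE.
have : y \in [set v | e x v] by rewrite inE.
by rewrite Nx => /set1P->.
Qed.

Lemma prev_cycle_neq p x : cycle e p -> x \in p -> prev p x != x.
Proof. by move=> cp xp; apply: contraTneq (prev_cycle cp xp) => ->; rewrite e_irr. Qed.

Lemma prev_neq_next p x : (2 < size p)%N -> uniq p -> x \in p -> prev p x != next p x.
Proof.
move=> p_gt2 up xp; apply/negP => /eqP prev_next.
have nnx : next p (next p x) = x by rewrite -prev_next next_prev.
case: (rot_to xp) => i s rE.
have up' : uniq (x :: s) by rewrite -rE rot_uniq.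
have sz : size (x :: s) = size p by rewrite -rE size_rot.
move: nnx; rewrite -!(next_rot i up) rE.
case: s {rE} up' sz => [|y [|z q]] up' sz //=; try by move: p_gt2; rewrite -sz.
have yx : y != x by apply: contraTneq up' => ->; rewrite /= in_cons eqxx.
have zx : z != x by apply: contraTneq up' => ->; rewrite /= !in_cons eqxx orbT.
by rewrite eqxx (negPf yx) eqxx => /eqP; rewrite (negPf zx).
Qed.

Lemma connect_next_cycleD1 S p x v : cycle e p -> uniq p -> {subset p <= S} ->
  x \in p -> v \in p -> v != x -> conn (S :\ x) (next p x) v.
Proof.
move=> cp up pS xp vp vx; case: (rot_to xp) => i s rE.
have sS : {subset x :: s <= S} by move=> z; rewrite -rE mem_rot; apply: pS.
rewrite -(next_rot i up) rE; move: (cp) (up) (vp); rewrite -(rot_cycle i) -(rot_uniq i).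
rewrite -(mem_rot i) rE; case: s {rE} sS => [|y s] sS; first by rewrite inE (negPf vx).
rewrite /= rcons_path eqxx => /and3P[_ ps _] /andP[xys _].
rewrite in_cons (negPf vx) /= => vys; apply: path_connect vys.
apply: (@sub_in_path _ (mem (S :\ x)) e) ps => [a b aS bS eab|].
  by rewrite /restr aS bS.
apply/allP => z zys; change (z \in S :\ x).
have zS : z \in S by apply: sS; rewrite in_cons zys orbT.
by rewrite in_setD1 zS andbT; apply: contraNneq xys => <-.
Qed.

Lemma cycle_cut_vertex S p u : is_cycle e p -> {subset p <= S} -> u \in p ->
  (ncomp_nbhd S u < deg_in S u)%N.
Proof.
case/andP=> p_gt2 /andP[cp up] pS u_p; apply/ncomp_nbhd_ltP.
exists (prev p u), (next p u); split; first exact: prev_neq_next.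
- by rewrite inE pS ?mem_prev // e_sym prev_cycle.
- by rewrite inE pS ?mem_next // next_cycle.
rewrite connect_restr_sym; apply: connect_next_cycleD1; rewrite ?mem_prev //.
exact: prev_cycle_neq.
Qed.

Lemma mem_cycle_edges p a b : [set a; b] \in cycle_edges p -> a \in p.
Proof.
case/imsetP=> y yp /setP/(_ a); rewrite !inE eqxx /= => /esym/orP[]/eqP-> //.
by rewrite mem_next.
Qed.

Lemma prev_cycle_edges p x : uniq p -> x \in p -> [set x; prev p x] \in cycle_edges p.
Proof.
move=> up xp; rewrite setUC -[X in [set _; X]](next_prev up x).
by apply: imset_f; rewrite mem_prev.
Qed.

(* Walking along [q] from [u], the first edge outside [p] starts in [p]. *)
Lemma cycle_departure p q u : uniq q -> u \in p -> u \in q ->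
  ~~ (cycle_edges q \subset cycle_edges p) ->
  exists x, [/\ x \in p, x \in q & [set x; next q x] \notin cycle_edges p].
Proof.
move=> uq up u_q /subsetPn[_ /imsetP[z zq ->] zE].
have /existsP[x /and3P[xp xq xE]] :
    [exists x, [&& x \in p, x \in q & [set x; next q x] \notin cycle_edges p]].
  move: zE; apply: contraNT => /existsPn noDep.
  have p_closed y : y \in p -> next q y \in p.
    move=> yp; have [yq|yq] := boolP (y \in q); last by rewrite next_nth (negPf yq).
    by have := noDep y; rewrite yp yq negbK setUC => /mem_cycle_edges.
  have zp : z \in p.
    move: zq; rewrite -(fconnect_cycle (cycle_next uq) u_q) => /connectP[s + ->].
    by elim: s u up {u_q} => //= y s IHs w wp /andP[/eqP <- /IHs]; apply; apply: p_closed.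
  by have := noDep z; rewrite zp zq negbK.
by exists x.
Qed.

(* [prev p x], [next p x] and [next q x] are distinct neighbours of [x].  In
   [S :\ x] the first two are joined along [p], and [next q x] is joined along
   [q] to [prev q x], which either lies on [p] or is a fourth neighbour. *)
Lemma branch_vertex S p q x : is_cycle e p -> is_cycle e q ->
  {subset p <= S} -> {subset q <= S} -> x \in p -> x \in q ->
  [set x; next q x] \notin cycle_edges p -> (ncomp_nbhd S x + 2 <= deg_in S x)%N.
Proof.
case/andP=> p_gt2 /andP[cp up]; case/andP=> q_gt2 /andP[cq uq] pS qS xp xq xyE.
set a := prev p x; set b := next p x; set y := next q x; set t := prev q x.
rewrite -/y in xyE.
have ap : a \in p by rewrite mem_prev.
have bp : b \in p by rewrite mem_next.
have tq : t \in q by rewrite mem_prev.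
have aN : a \in nbhd S x by rewrite inE pS // e_sym prev_cycle.
have bN : b \in nbhd S x by rewrite inE pS // next_cycle.
have yN : y \in nbhd S x by rewrite inE qS ?mem_next // next_cycle.
have tN : t \in nbhd S x by rewrite inE qS // e_sym prev_cycle.
have ab : a != b by apply: prev_neq_next.
have ay : a != y by apply: contraNneq xyE => <-; apply: prev_cycle_edges.
have ny : b != y by apply: contraNneq xyE => <-; apply: imset_f.
have ty : t != y by apply: prev_neq_next.
have bX z : z \in p -> z != x -> conn (S :\ x) b z by apply: connect_next_cycleD1.
have yt : conn (S :\ x) y t by apply: connect_next_cycleD1; rewrite ?prev_cycle_neq.
have bD : b \in nbhd S x :\: [set a; y].
  by rewrite in_setD in_set2 bN andbT negb_or (eq_sym b a) ab ny.
have card_ay : #|[set a; y]| = 2 by rewrite cards2 ay.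
rewrite -card_ay; apply: leq_ncomp_nbhd_add => [|_ /set2P[->|->]].
- by rewrite subUset !sub1set aN yN.
- by exists b => //; apply: bX => //; apply: prev_cycle_neq.
have [tp|tp] := boolP (t \in p).
  exists b => //; apply: connect_trans (bX t tp _) _; last by rewrite connect_restr_sym.
  exact: prev_cycle_neq.
exists t; last by rewrite connect_restr_sym.
by rewrite in_setD in_set2 tN (negPf ty) orbF andbT; apply: contraNneq tp => ->.
Qed.

Lemma two_cycles_branch_vertex S p q u : is_cycle e p -> is_cycle e q ->
  {subset p <= S} -> {subset q <= S} -> u \in p -> u \in q ->
  cycle_edges q != cycle_edges p ->
  exists2 x, x \in S & (ncomp_nbhd S x + 2 <= deg_in S x)%N.
Proof.
move=> cp cq pS qS up uq; rewrite eqEsubset negb_and => E_neq.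
wlog E_nsub : p q cp cq pS qS up uq {E_neq} / ~~ (cycle_edges q \subset cycle_edges p).
  by move=> wlog_qp; case/orP: E_neq; [apply: (wlog_qp p q) | apply: (wlog_qp q p)].
have /and3P[_ _ uniq_q] := cq.
have [x [xp xq xE]] := cycle_departure uniq_q up uq E_nsub.
by exists x; [apply: pS | apply: branch_vertex cp cq pS qS xp xq xE].
Qed.

End InducedSubgraph.

Section MatrixRank.
Variable F : fieldType.
Local Open Scope ring_scope.

Lemma mxrank_mxsub m n m' n' (f : 'I_m' -> 'I_m) (g : 'I_n' -> 'I_n)
    (A : 'M[F]_(m, n)) :
  (\rank (mxsub f g A) <= \rank A)%N.
Proof.
have -> : mxsub f g A = (rowsub g (rowsub f A)^T)^T by apply/matrixP => i j; rewrite !mxE.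
rewrite mxrank_tr; apply: leq_trans (mxrankS (rowsub_sub _ _)) _.
by rewrite mxrank_tr; apply/mxrankS/rowsub_sub.
Qed.

Lemma mxrank_col_mx_ltn m n (M : 'M[F]_(m, n)) (v : 'rV[F]_n) j :
  (forall i, M i j = 0) -> v 0 j != 0 -> (\rank M < \rank (col_mx M v))%N.
Proof.
move=> Mj0 vj0; apply: rank_ltmx.
rewrite ltmxE -!addsmxE addsmxSl addsmx_sub submx_refl /=; apply: contra vj0.
by case/submxP=> D ->; rewrite mxE big1 // => i _; rewrite Mj0 mulr0.
Qed.

(* Subtracting multiples of row [w] clears column [u] from the rows [f i];
   rows [w] and [u] then each add one to the rank, being the only rows with a
   nonzero entry in columns [u] and [w] respectively. *)
Lemma mxrank_pendant n (A : 'M[F]_n) w u m (f : 'I_m -> 'I_n) :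
  w != u -> A w u != 0 -> A u w != 0 ->
  (forall j, j != u -> A w j = 0) -> (forall i, i != u -> A i w = 0) ->
  (forall i, (f i != w) && (f i != u)) ->
  (\rank (mxsub f f A) + 2 <= \rank A)%N.
Proof.
move=> wu Awu Auw Aw_ Aw f_wu; set a := A w u.
have Awf j : A w (f j) = 0 by apply: Aw_; case/andP: (f_wu j).
have Afw i : A (f i) w = 0 by apply: Aw; case/andP: (f_wu i).
have Aww : A w w = 0 by apply: Aw_.
pose C := \matrix_(i < m, j < n) (A (f i) j - A (f i) u / a * A w j).
have C_A : (C <= A)%MS.
  apply/row_subP => i; have -> : row i C = row (f i) A - (A (f i) u / a) *: row w A.
    by apply/matrixP => k j; rewrite !mxE.
  by rewrite addmx_sub ?eqmx_opp ?scalemx_sub ?row_sub.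
have C_f : mxsub id f C = mxsub f f A by apply/matrixP => i j; rewrite !mxE Awf mulr0 subr0.
have Cu i : C i u = 0 by rewrite mxE divfK ?subrr.
have Cw i : C i w = 0 by rewrite mxE Afw Aww mulr0 subr0.
have M1w i : col_mx C (row w A) i w = 0.
  by rewrite mxE; case: split => k; rewrite ?Cw // mxE.
have lt1 := mxrank_col_mx_ltn Cu (_ : (row w A) 0 u != 0).
have lt2 := mxrank_col_mx_ltn M1w (_ : (row u A) 0 w != 0).
have M2_A : (col_mx (col_mx C (row w A)) (row u A) <= A)%MS by rewrite !col_mx_sub C_A !row_sub.
have := mxrank_mxsub id f C; rewrite C_f => le_fC.
rewrite !mxE in lt1 lt2; rewrite addn2; apply: leq_trans (mxrankS M2_A).
by apply: leq_trans (lt2 Auw); rewrite ltnS; apply: leq_ltn_trans le_fC (lt1 Awu).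
Qed.

End MatrixRank.

Section GainGraph.
Variables (R : realType) (T : finType) (e : rel T) (phi : T -> T -> R[i]).
Hypotheses (e_irr : irreflexive e) (e_sym : symmetric e) (phi_unit : unit_gain e phi).
Implicit Types (S : {set T}) (x : T).
Local Open Scope ring_scope.

Lemma gain_neq0 x y : e x y -> phi x y != 0.
Proof. by case/phi_unit=> /(congr1 (fun z => z == 0)); rewrite normr_eq0 oner_eq0 => ->. Qed.

Definition enum_widen S S' (sSS' : S \subset S') (i : 'I_#|S|) : 'I_#|S'| :=
  enum_rank_in (subsetP sSS' _ (enum_valP i)) (enum_val i).

Lemma enum_widenK S S' (sSS' : S \subset S') i : enum_val (enum_widen sSS' i) = enum_val i.
Proof. by rewrite enum_rankK_in // (subsetP sSS' _ (enum_valP i)). Qed.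

Lemma gain_adj_sub S S' (sSS' : S \subset S') :
  gain_adj e phi S = mxsub (enum_widen sSS') (enum_widen sSS') (gain_adj e phi S').
Proof. by apply/matrixP => i j; rewrite !mxE !enum_widenK. Qed.

Lemma gain_rank_mono S S' : S \subset S' -> (gain_rank e phi S <= gain_rank e phi S')%N.
Proof. by move=> sSS'; rewrite /gain_rank (gain_adj_sub sSS') mxrank_mxsub. Qed.

Lemma gain_rank_pendant S w u : w \in S -> nbhd e S w = [set u] ->
  (gain_rank e phi (S :\ w :\ u) + 2 <= gain_rank e phi S)%N.
Proof.
move=> wS Nw; have : u \in nbhd e S w by rewrite Nw set11.
rewrite inE => /andP[uS ewu].
have wu : w != u by apply: contraTneq ewu => ->; rewrite e_irr.
have sub : S :\ w :\ u \subset S by rewrite subDset subsetU // subD1set orbT.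
set wb := enum_rank_in wS w; set ub := enum_rank_in uS u.
have wbE : enum_val wb = w by rewrite enum_rankK_in.
have ubE : enum_val ub = u by rewrite enum_rankK_in.
have adj_u j : e w (enum_val j) -> j = ub.
  move=> ewj; have : enum_val j \in nbhd e S w by rewrite inE enum_valP.
  by rewrite Nw => /set1P uj; rewrite -(enum_valK_in uS j) uj.
rewrite /gain_rank (gain_adj_sub sub); apply: (@mxrank_pendant _ _ _ wb ub).
- by apply/eqP => wub; case/eqP: wu; rewrite -wbE wub ubE.
- by rewrite mxE wbE ubE ewu gain_neq0.
- by rewrite mxE wbE ubE e_sym ewu gain_neq0 // e_sym.
- by move=> j; rewrite mxE wbE; case: ifP => // /adj_u ->; rewrite eqxx.
- by move=> i; rewrite mxE wbE e_sym; case: ifP => // /adj_u ->; rewrite eqxx.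
move=> i; have := enum_valP i; rewrite !in_setD1 => /and3P[iu iw _].
by apply/andP; split; [apply: contraNneq _ iw | apply: contraNneq _ iu] => eq_i;
  rewrite -(enum_widenK sub) eq_i ?wbE ?ubE.
Qed.

Definition rank_cyc_indep S :=
  (gain_rank e phi S + 2 * cyclomatic e S + 2 * indep_num e S)%N.

Local Notation rci := rank_cyc_indep.

Lemma rank_cyc_indep_cut S x : x \in S -> (ncomp_nbhd e S x < deg_in e S x)%N ->
  (rci (S :\ x) + 2 <= rci S)%N.
Proof.
move=> xS lt_kd; have := cyclomaticD1 e_irr e_sym xS.
have := gain_rank_mono (subD1set S x); have := indep_num_mono e (subD1set S x).
by rewrite /rci; lia.
Qed.

Lemma rank_cyc_indep_isolated S x : x \in S -> deg_in e S x = 0%N ->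
  (rci (S :\ x) + 2 <= rci S)%N.
Proof.
move=> xS d0.
have lt_a : (indep_num e (S :\ x) < indep_num e S)%N.
  apply: (ltn_indep_num_nonadj e_irr e_sym xS) (subxx _) _ => y /setD1P[_ yS].
  apply: contra_eqN d0 => exy; rewrite -lt0n card_gt0; apply/set0Pn.
  by exists y; rewrite inE yS.
have := leq_cyclomaticD1 e_irr e_sym xS; have := gain_rank_mono (subD1set S x).
by rewrite /rci; lia.
Qed.

Lemma rank_cyc_indep_pendant S w u : w \in S -> nbhd e S w = [set u] ->
  (rci (S :\ w :\ u) + 4 <= rci S)%N.
Proof.
move=> wS Nw; have := gain_rank_pendant wS Nw.
have := ltn_indep_num_pendant e_irr e_sym wS Nw.
have uS' : u \in S :\ w by rewrite (subsetP (nbhd_subD1 e_irr _ _)) // Nw set11.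
have := leq_cyclomaticD1 e_irr e_sym uS'; have := leq_cyclomaticD1 e_irr e_sym wS.
by rewrite /rci; lia.
Qed.

Theorem rank_lower_bound S : (2 * #|S| <= rci S)%N.
Proof.
have [n] := ubnP #|S|; elim: n S => // n IHn S /ltnSE-leSn.
have IH S' : S' \proper S -> (2 * #|S'| <= rci S')%N.
  by move=> /proper_card ltS'S; apply: IHn; apply: leq_trans leSn.
have [->|[x0 x0S]] := set_0Vmem S; first by rewrite cards0.
have [/exists_inP[x xS lt_kd]|no_cut] :=
  boolP [exists x in S, ncomp_nbhd e S x < deg_in e S x]%N.
  have := IH _ (properD1 xS); have := rank_cyc_indep_cut xS lt_kd.
  by rewrite (cardsD1 x S) xS; lia.
have c0 : cyclomatic e S = 0%N.
  apply/eqP; rewrite -leqn0 leqNgt; apply: contra no_cut.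
  by case/(exists_cut_vertex e_irr e_sym) => x xS lt_kd; apply/exists_inP; exists x.
have [w wS] := exists_leaf e_irr e_sym x0S c0; rewrite leq_eqVlt ltnS leqn0.
case/orP=> [/cards1P[u Nw]|/eqP d0]; last first.
  have := IH _ (properD1 wS); have := rank_cyc_indep_isolated wS d0.
  by rewrite (cardsD1 w S) wS; lia.
have uS' : u \in S :\ w by rewrite (subsetP (nbhd_subD1 e_irr _ _)) // Nw set11.
have := IH _ (sub_proper_trans (subD1set _ u) (properD1 wS)).
have := rank_cyc_indep_pendant wS Nw.
by rewrite (cardsD1 w S) wS (cardsD1 u (S :\ w)) uS'; lia.
Qed.

Lemma tight_cut S x : rci S = (2 * #|S|)%N -> x \in S ->
    (ncomp_nbhd e S x < deg_in e S x)%N ->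
  [/\ gain_rank e phi S = gain_rank e phi (S :\ x),
      cyclomatic e S = (cyclomatic e (S :\ x)).+1,
      indep_num e S = indep_num e (S :\ x) &
      rci (S :\ x) = (2 * #|S :\ x|)%N].
Proof.
move=> tight xS lt_kd; have := cyclomaticD1 e_irr e_sym xS.
have := gain_rank_mono (subD1set S x); have := indep_num_mono e (subD1set S x).
have := rank_lower_bound (S :\ x); move: tight.
by rewrite /rci (cardsD1 x S) xS; split; lia.
Qed.

Lemma tight_deg_le S x : rci S = (2 * #|S|)%N -> x \in S ->
  (deg_in e S x <= ncomp_nbhd e S x + 1)%N.
Proof.
move=> tight xS; rewrite leqNgt; apply/negP => lt_kd.
have [|_ c_eq _ _] := tight_cut tight xS; first lia.
by have := cyclomaticD1 e_irr e_sym xS; lia.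
Qed.

Lemma tight_cut_not_pendant_nbr S u w : rci S = (2 * #|S|)%N -> u \in S ->
  (ncomp_nbhd e S u < deg_in e S u)%N -> w \in S -> nbhd e S w != [set u].
Proof.
move=> tight uS lt_kd wS; apply/negP => /eqP Nw.
have [r_eq c_eq a_eq tight_u] := tight_cut tight uS lt_kd.
have /setIdP[_ ewu] : u \in nbhd e S w by rewrite Nw set11.
have wu : w != u by apply: contraTneq ewu => ->; rewrite e_irr.
have wS' : w \in S :\ u by rewrite in_setD1 wu.
have Swu : S :\ w :\ u = S :\ u :\ w by rewrite setDDl setUC -setDDl.
have := gain_rank_pendant wS Nw; have := ltn_indep_num_pendant e_irr e_sym wS Nw.
have := leq_cyclomaticD1 e_irr e_sym wS'; have := rank_lower_bound (S :\ u :\ w).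
by move: tight_u; rewrite /rci Swu (cardsD1 w (S :\ u)) wS'; lia.
Qed.

End GainGraph.

Unset Implicit Arguments.
Local Open Scope ring_scope.

Theorem lemma4p4 (R : realType) (T : finType) (e : rel T)
  (phi : T -> T -> R[i]) (u : T) :
  simple_graph e -> unit_gain e phi ->
  (gain_rank e phi setT)%:Z
    = 2 * (#|T|)%:Z - 2 * (cyclomatic e setT)%:Z - 2 * (indep_num e setT)%:Z ->
  (exists p, is_cycle e p && (u \in p)) ->
  [/\ gain_rank e phi setT = gain_rank e phi (setT :\ u),
      (gain_rank e phi (setT :\ u))%:Z
        = 2 * ((#|T|)%:Z - 1) - 2 * (cyclomatic e (setT :\ u))%:Z
          - 2 * (indep_num e (setT :\ u))%:Z,
      cyclomatic e setT = (cyclomatic e (setT :\ u)).+1,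
      indep_num e setT = indep_num e (setT :\ u) &
      on_unique_cycle e u /\ ~~ quasi_pendant e u].
Proof.
move=> [e_irr e_sym] phi_unit rank_eq [p /andP[cyc_p u_p]].
have inT (s : seq T) : {subset s <= [set: T]} by move=> ? _; apply: in_setT.
have uT := in_setT u.
have tight : rank_cyc_indep e phi setT = (2 * #|[set: T]|)%N.
  by rewrite /rank_cyc_indep cardsT; lia.
have cut_u := cycle_cut_vertex e_irr e_sym cyc_p (inT p) u_p.
have [r_eq c_eq a_eq tight_u] := tight_cut e_irr e_sym phi_unit tight uT cut_u.
split=> //.
  have card_T : #|T| = #|[set: T] :\ u|.+1 by rewrite -cardsT (cardsD1 u) uT.
  by move: tight_u; rewrite /rank_cyc_indep card_T; lia.
split.
  exists p; split=> // q cyc_q u_q; apply/eqP; apply: contraT => E_neq.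
  have [x xT] := two_cycles_branch_vertex e_irr e_sym cyc_p cyc_q (inT p) (inT q) u_p u_q E_neq.
  by have := tight_deg_le e_irr e_sym phi_unit tight xT; lia.
rewrite /quasi_pendant negb_and; apply/orP; right; apply/existsP => -[w /andP[euw pend_w]].
have ewu : e w u by rewrite e_sym.
have := tight_cut_not_pendant_nbr e_irr e_sym phi_unit tight uT cut_u (in_setT w).
by rewrite (pendant_nbhd pend_w ewu) eqxx.
Qed.
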